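(* Let $\varepsilon_+(C,C_D)$ and $\lambda_+(C_D)$ be as defined in the context. Then: (i) If $B>1+\beta+\delta$: $\lambda_+(C_D)>0$ for every $C_D>0$, and $\varepsilon_+(C,C_D)>0$ for every $(C,C_D)\in[0,\infty)^2\setminus\{(0,0)\}$; thus every equilibrium $(0,0,C_D,0,0,D)$ with $C_D>0$ and every equilibrium $(C,0,C_D,0,0,0)$ with $(C,C_D)\ne(0,0)$ has a positive real Jacobian eigenvalue (is unstable). (ii) If $1+\beta<B<1+\beta+\delta$: $\lambda_+(C_D)<0$ for every $C_D>0$; and for $C,C_D\ge0$ with $C_D>0$, $\varepsilon_+(C,C_D)<0$ if $$\frac{C}{C_D}<\frac{1-\frac{B}{1+\beta+\delta}}{\frac{B}{1+\beta}-1},$$ while $\varepsilon_+(C,C_D)>0$ if the reverse strict inequality holds (and $\varepsilon_+(C,0)>0$ for $C>0$). (iii) If $0<B<1+\beta$: $\lambda_+(C_D)<0$ for every $C_D>0$ and $\varepsilon_+(C,C_D)<0$ for every $(C,C_D)\in[0,\infty)^2\setminus\{(0,0)\}$. In all cases, at every point of $\{(0,0,0,0,V,D):V,D\ge0,(V,D)\ne(0,0)\}$ all Jacobian eigenvalues are non-positive.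
   Context: Consider the autonomous system of ODEs in the state variables $(C,C_V,C_D,C_{DV},V,D)\in\mathbb{R}^6$: $\dot C=-\iota C(V+D)$, $\dot C_V=\iota CV-C_V(\iota D+\alpha)$, $\dot C_D=\iota(CD-C_DV)$, $\dot C_{DV}=\iota(C_DV+C_VD)-\alpha C_{DV}$, $\dot V=\alpha\eta\left(C_V+\frac{C_{DV}}{\kappa}\right)-\iota V(C+C_D)$, $\dot D=\alpha\beta\eta\left(C_V+\frac{C_{DV}}{\kappa}\right)+\alpha\delta\eta\frac{C_{DV}}{\kappa}-\iota D(C+C_V)$, where $B>0$, $\beta\in[0,1]$, $\delta>1$, $\iota>0$, $\alpha>0$, $\eta=\frac{B}{1+\beta}$, $\kappa=1+\frac{\delta}{1+\beta}$. Define $\varepsilon_+(C,C_D)=-\frac{\iota(C+C_D)+\alpha}{2}+\frac12\sqrt{4\alpha C\eta\iota+(\iota(C+C_D)-\alpha)^2+\frac{4\alpha C_D\eta\iota}{\kappa}}$ (the largest non-trivial Jacobian eigenvalue at the equilibrium $(C,0,C_D,0,0,0)$) and $\lambda_+(C_D)=-\frac{\iota C_D+\alpha}{2}+\frac12\sqrt{(\iota C_D-\alpha)^2+\frac{4\alpha C_D\eta\iota}{\kappa}}$ (the largest non-trivial Jacobian eigenvalue at the equilibrium $(0,0,C_D,0,0,D)$). *)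

From mathcomp Require Import all_boot all_order all_algebra.
From mathcomp Require Import all_classical all_reals all_analysis.
From mathcomp Require Import complex.
Set Implicit Arguments. Unset Strict Implicit. Unset Printing Implicit Defensive.
Import Order.TTheory GRing.Theory Num.Theory.
Local Open Scope ring_scope.

Section Model.
Variable R : realType.

Definition eta_ (B beta : R) : R := B / (1 + beta).
Definition kappa_ (beta delta : R) : R := 1 + delta / (1 + beta).

Definition pt6 (a b c d e f : R) : 'rV[R]_6 :=
  \row_(i < 6) nth 0 [:: a; b; c; d; e; f] i.

(* k-th coordinate (k = 0..5) of a state x = (C, C_V, C_D, C_DV, V, D) *)
Definition coord6 (x : 'rV[R]_6) (k : nat) : R := x ord0 (inord k).

Definition odeF (B beta delta iota alpha : R) (x : 'rV[R]_6) : 'rV[R]_6 :=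
  let C := coord6 x 0 in
  let CV := coord6 x 1 in
  let CD := coord6 x 2 in
  let CDV := coord6 x 3 in
  let V := coord6 x 4 in
  let D := coord6 x 5 in
  let eta := eta_ B beta in
  let kappa := kappa_ beta delta in
  pt6 (- iota * C * (V + D))
      (iota * C * V - CV * (iota * D + alpha))
      (iota * (C * D - CD * V))
      (iota * (CD * V + CV * D) - alpha * CDV)
      (alpha * eta * (CV + CDV / kappa) - iota * V * (C + CD))
      (alpha * beta * eta * (CV + CDV / kappa) + alpha * delta * eta * (CDV / kappa)
         - iota * D * (C + CV)).

Definition jac (f : 'rV[R]_6 -> 'rV[R]_6) (x : 'rV[R]_6) : 'M[R]_6 :=
  \matrix_(i < 6, j < 6) derive1 (fun t : R => f (x + t *: delta_mx 0 j) ord0 i) 0.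

Definition eps_plus (B beta delta iota alpha : R) (C CD : R) : R :=
  let eta := eta_ B beta in
  let kappa := kappa_ beta delta in
  - (iota * (C + CD) + alpha) / 2
  + Num.sqrt (4 * alpha * C * eta * iota + (iota * (C + CD) - alpha) ^+ 2
              + 4 * alpha * CD * eta * iota / kappa) / 2.

Definition lam_plus (B beta delta iota alpha : R) (CD : R) : R :=
  let eta := eta_ B beta in
  let kappa := kappa_ beta delta in
  - (iota * CD + alpha) / 2
  + Num.sqrt ((iota * CD - alpha) ^+ 2 + 4 * alpha * CD * eta * iota / kappa) / 2.

Definition complex_eigenvalue (A : 'M[R]_6) (z : R[i]) : bool :=
  root (char_poly (map_mx (real_complex R) A)) z.

End Model.

From mathcomp Require Import all_boot all_order all_algebra.
From mathcomp Require Import all_classical all_reals all_analysis.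
From mathcomp Require Import complex.
From mathcomp Require Import ring lra.
Import Order.TTheory GRing.Theory Num.Theory.
Local Open Scope ring_scope.

(* eps_+(C, CD) is the larger root of
     mu^2 + (iota (C + CD) + alpha) mu + alpha iota (C (1 - eta) + CD (1 - eta / kappa)),
   and lam_+(CD) = eps_+(0, CD).  With a positive linear coefficient, the larger root of a
   monic quadratic has the sign opposite to its constant term, and the signs of 1 - eta and
   1 - eta / kappa are those of 1 + beta - B and 1 + beta + delta - B; this gives (i)-(iii).
   At the equilibria (C, 0, CD, 0, 0, D) with C D = 0 every root of that quadratic is an
   eigenvalue of the Jacobian, with a left eigenvector supported on C_V, C_DV, V.
   At (0, 0, 0, 0, V, D) the Jacobian is triangular with nonpositive diagonal. *)

Section LargerRoot.
Context {R : rcfType}.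
Variables b c : R.

Definition larger_root : R := - b / 2 + Num.sqrt (b ^+ 2 - 4 * c) / 2.

Lemma larger_rootP : 0 <= b ^+ 2 - 4 * c -> larger_root ^+ 2 + b * larger_root + c = 0.
Proof.
move=> disc_ge0; have := sqr_sqrtr disc_ge0.
rewrite /larger_root; set s := Num.sqrt _ => s2.
have -> : c = (b ^+ 2 - s ^+ 2) / 4 by rewrite s2; field.
by field.
Qed.

Lemma larger_root_gt0 : 0 < b -> c < 0 -> 0 < larger_root.
Proof.
move=> b_gt0 c_lt0; have disc_ge0 : 0 <= b ^+ 2 - 4 * c by nra.
have := sqr_sqrtr disc_ge0; have := sqrtr_ge0 (b ^+ 2 - 4 * c).
rewrite /larger_root; set s := Num.sqrt _ => s_ge0 s2.
have : b < s by nra.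
lra.
Qed.

Lemma larger_root_lt0 : 0 < b -> 0 < c -> 0 <= b ^+ 2 - 4 * c -> larger_root < 0.
Proof.
move=> b_gt0 c_gt0 disc_ge0; have := sqr_sqrtr disc_ge0.
have := sqrtr_ge0 (b ^+ 2 - 4 * c).
rewrite /larger_root; set s := Num.sqrt _ => s_ge0 s2.
have : s < b.
  rewrite -(ltr_pXn2r (n := 2)) ?nnegrE ?(ltW b_gt0) //; lra.
lra.
Qed.

End LargerRoot.

Lemma derive1_quadratic_at0 (R : realType) (g : R -> R) (b : R) :
  (forall t, g t = g 0 + b * t + (g 1 - g 0 - b) * t ^+ 2) -> derive1 g 0 = b.
Proof.
move=> gE.
have -> : g = horner ((g 0)%:P + b *: 'X + (g 1 - g 0 - b) *: 'X^2).
  apply/funext => t; rewrite {1}gE !(hornerD, hornerZ, hornerC, hornerX, hornerXn); ring.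
rewrite -derivE !(derivD, derivZ, derivC, derivX, derivXn).
by rewrite !(hornerD, hornerZ, hornerC, hornerX, hornerXn, hornerMn) /= expr1; ring.
Qed.

Lemma ltr_ratio_lincomb (R : realFieldType) (p q x y : R) : p < 0 -> 0 < y ->
  (x / y < q / - p) = (0 < x * p + y * q).
Proof.
move=> p_lt0 y_gt0; have Np_gt0 : 0 < - p by rewrite oppr_gt0.
rewrite ltr_pdivlMr // mulrAC ltr_pdivrMr // -subr_gt0.
by congr (0 < _); ring.
Qed.

Lemma ltr_lincomb_ratio (R : realFieldType) (p q x y : R) : p < 0 -> 0 < y ->
  (q / - p < x / y) = (x * p + y * q < 0).
Proof.
move=> p_lt0 y_gt0; have Np_gt0 : 0 < - p by rewrite oppr_gt0.
rewrite ltr_pdivrMr // mulrAC ltr_pdivlMr // -subr_lt0.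
by congr (_ < 0); ring.
Qed.

Lemma pair0_neq0 (R : numDomainType) (y : R) : 0 < y -> (0 : R, y) <> (0, 0).
Proof. by move=> y_gt0 [y0]; rewrite y0 ltxx in y_gt0. Qed.

Lemma lincomb_lt0 (R : realDomainType) (p q x y : R) : p < 0 -> q < 0 ->
  0 <= x -> 0 <= y -> (x, y) <> (0, 0) -> x * p + y * q < 0.
Proof.
move=> p_lt0 q_lt0 x_ge0 y_ge0 xy_neq0.
have [x0|x_neq0] := eqVneq x 0.
- have y_gt0 : 0 < y by rewrite lt0r y_ge0 andbT; apply: contraPneq xy_neq0 => ->; rewrite x0.
  by rewrite x0 mul0r add0r pmulr_rlt0.
- have x_gt0 : 0 < x by rewrite lt0r x_neq0.
  by rewrite -(addr0 0) ltr_leD ?pmulr_rlt0 ?mulr_ge0_le0 // ltW.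
Qed.

Lemma lincomb_gt0 (R : realDomainType) (p q x y : R) : 0 < p -> 0 < q ->
  0 <= x -> 0 <= y -> (x, y) <> (0, 0) -> 0 < x * p + y * q.
Proof.
move=> p_gt0 q_gt0 x_ge0 y_ge0 xy_neq0.
rewrite -oppr_lt0 opprD -mulrN -[- (y * q)]mulrN.
by apply: lincomb_lt0; rewrite ?oppr_lt0.
Qed.

Section Model.
Context {R : realType}.
Variables B beta delta iota alpha : R.

Local Notation eta := (eta_ B beta).
Local Notation kappa := (kappa_ beta delta).
Local Notation F := (odeF B beta delta iota alpha).
Local Notation eps := (eps_plus B beta delta iota alpha).
Local Notation lam := (lam_plus B beta delta iota alpha).

Lemma kappa_gt0 : 0 <= beta -> 0 <= delta -> 0 < kappa.
Proof.
move=> beta_ge0 delta_ge0; rewrite /kappa_.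
suff : 0 <= delta / (1 + beta) by lra.
by apply: divr_ge0 => //; lra.
Qed.

Lemma eta_gt0 : 0 < B -> 0 <= beta -> 0 < eta.
Proof. by move=> B_gt0 beta_ge0; rewrite /eta_; apply: divr_gt0 => //; lra. Qed.

Lemma eta_div_kappa : 0 <= beta -> 0 <= delta -> eta / kappa = B / (1 + beta + delta).
Proof.
move=> beta_ge0 delta_ge0; rewrite /eta_ /kappa_; field.
by rewrite !lt0r_neq0 //; lra.
Qed.

Lemma one_sub_eta_lt0 : 0 <= beta -> (1 - eta < 0) = (1 + beta < B).
Proof. by move=> beta_ge0; rewrite subr_lt0 ltr_pdivlMr ?mul1r //; lra. Qed.

Lemma one_sub_eta_gt0 : 0 <= beta -> (0 < 1 - eta) = (B < 1 + beta).
Proof. by move=> beta_ge0; rewrite subr_gt0 ltr_pdivrMr ?mul1r //; lra. Qed.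

Lemma one_sub_eta_div_kappa_lt0 : 0 <= beta -> 0 <= delta ->
  (1 - eta / kappa < 0) = (1 + beta + delta < B).
Proof.
by move=> beta_ge0 delta_ge0; rewrite eta_div_kappa // subr_lt0 ltr_pdivlMr ?mul1r //; lra.
Qed.

Lemma one_sub_eta_div_kappa_gt0 : 0 <= beta -> 0 <= delta ->
  (0 < 1 - eta / kappa) = (B < 1 + beta + delta).
Proof.
by move=> beta_ge0 delta_ge0; rewrite eta_div_kappa // subr_gt0 ltr_pdivrMr ?mul1r //; lra.
Qed.

Definition eps_const (C CD : R) : R :=
  alpha * iota * (C * (1 - eta) + CD * (1 - eta / kappa)).

Lemma eps_plusE C CD : eps C CD = larger_root (iota * (C + CD) + alpha) (eps_const C CD).
Proof. by rewrite /eps_plus /larger_root /eps_const; congr (_ + Num.sqrt _ / 2); ring. Qed.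

Lemma lam_plusE CD : lam CD = eps 0 CD.
Proof. by rewrite /lam_plus /eps_plus; congr (_ / 2 + Num.sqrt _ / 2); ring. Qed.

Section Signs.
Hypotheses (B_gt0 : 0 < B) (beta_ge0 : 0 <= beta) (delta_ge0 : 0 <= delta).
Hypotheses (iota_gt0 : 0 < iota) (alpha_gt0 : 0 < alpha).
Variables (C CD : R).
Hypotheses (C_ge0 : 0 <= C) (CD_ge0 : 0 <= CD).

Let b_gt0 : 0 < iota * (C + CD) + alpha.
Proof. by apply: ltr_wpDl => //; apply: mulr_ge0 (ltW iota_gt0) (addr_ge0 C_ge0 CD_ge0). Qed.

Let disc_ge0 : 0 <= (iota * (C + CD) + alpha) ^+ 2 - 4 * eps_const C CD.
Proof.
have -> : (iota * (C + CD) + alpha) ^+ 2 - 4 * eps_const C CD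
  = (iota * (C + CD) - alpha) ^+ 2 + 4 * alpha * iota * eta * (C + CD / kappa).
  by rewrite /eps_const; ring.
have := kappa_gt0 beta_ge0 delta_ge0; have := eta_gt0 B_gt0 beta_ge0.
move: iota_gt0 alpha_gt0 C_ge0 CD_ge0 => ? ? ? ? ? ?.
apply: addr_ge0; first exact: sqr_ge0.
apply: mulr_ge0; first by apply: mulr_ge0; nra.
by apply: addr_ge0 => //; apply: divr_ge0 => //; lra.
Qed.

Lemma eps_plus_root :
  eps C CD ^+ 2 + (iota * (C + CD) + alpha) * eps C CD + eps_const C CD = 0.
Proof. by rewrite eps_plusE; apply: larger_rootP. Qed.

Lemma eps_plus_gt0 : eps_const C CD < 0 -> 0 < eps C CD.
Proof. by rewrite eps_plusE; apply: larger_root_gt0. Qed.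

Lemma eps_plus_lt0 : 0 < eps_const C CD -> eps C CD < 0.
Proof. by rewrite eps_plusE => c_gt0; apply: larger_root_lt0. Qed.

End Signs.

Lemma coord6_shift (x : 'rV[R]_6) (t : R) (j : 'I_6) (k : nat) : (k < 6)%N ->
  coord6 (x + t *: delta_mx 0 j) k = coord6 x k + t * (k == j)%:R.
Proof. by move=> lt_k6; rewrite /coord6 !mxE eqxx /= -(inj_eq val_inj) /= inordK. Qed.

Lemma coord6_pt6 (a b c d e f : R) (k : nat) : (k < 6)%N ->
  coord6 (pt6 a b c d e f) k = nth 0 [:: a; b; c; d; e; f] k.
Proof. by move=> lt_k6; rewrite /coord6 /pt6 mxE inordK. Qed.

Definition odeF_jacobian (x : 'rV[R]_6) : 'M[R]_6 :=
  let C := coord6 x 0 in let CV := coord6 x 1 in let CD := coord6 x 2 in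
  let V := coord6 x 4 in let D := coord6 x 5 in
  \matrix_(i < 6, j < 6) nth 0 (nth [::] [::
   [:: - iota * (V + D); 0; 0; 0; - iota * C; - iota * C];
   [:: iota * V; - (iota * D + alpha); 0; 0; iota * C; - iota * CV];
   [:: iota * D; 0; - iota * V; 0; - iota * CD; iota * C];
   [:: 0; iota * D; iota * V; - alpha; iota * CD; iota * CV];
   [:: - iota * V; alpha * eta; - iota * V; alpha * eta / kappa; - iota * (C + CD); 0];
   [:: - iota * D; alpha * beta * eta - iota * D; 0;
       alpha * beta * eta / kappa + alpha * delta * eta / kappa; 0; - iota * (C + CV)]] i) j.

(* Each component of [F] is quadratic in the state, hence a degree-2 polynomial in [t]
   along every coordinate line. *)
Lemma jac_odeF (x : 'rV[R]_6) : jac F x = odeF_jacobian x.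
Proof.
apply/matrixP => i j; rewrite !mxE; apply: derive1_quadratic_at0 => t.
rewrite /odeF /pt6 !mxE !coord6_shift //.
case: i => [[|[|[|[|[|[|?]]]]]] //= _];
case: j => [[|[|[|[|[|[|?]]]]]] //= _]; ring.
Qed.

(* At [(C, 0, CD, 0, 0, D)] the columns 1, 3, 4 of the Jacobian vanish outside rows 1, 3, 4,
   so a left eigenvector of that 3x3 block extends by zeros. *)
Lemma eigenvalue_jac_block C CD D mu v1 v3 v4 : v3 != 0 ->
  - (iota * D + alpha) * v1 + iota * D * v3 + alpha * eta * v4 = mu * v1 ->
  - alpha * v3 + alpha * eta / kappa * v4 = mu * v3 ->
  iota * C * v1 + iota * CD * v3 - iota * (C + CD) * v4 = mu * v4 ->
  eigenvalue (jac F (pt6 C 0 CD 0 0 D)) mu.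
Proof.
move=> v3_neq0 col1 col3 col4; apply/eigenvalueP.
exists (pt6 0 v1 0 v3 v4 0); last first.
  apply: contraNneq v3_neq0 => /(congr1 (fun u : 'rV_6 => u ord0 (inord 3))).
  by rewrite /pt6 !mxE inordK //= => <-.
apply/rowP => j; rewrite jac_odeF !mxE !big_ord_recl big_ord0 /=.
rewrite /odeF_jacobian !coord6_pt6 // /pt6 !mxE /=.
by case: j => [[|[|[|[|[|[|?]]]]]] //= _]; rewrite -?col1 -?col3 -?col4; ring.
Qed.

(* The eigenvector is [(v1, alpha eta, (mu + alpha) kappa)]; its last equation is [kappa]
   times the quadratic once [C v1 = C alpha eta kappa], which holds when [C D = 0]. *)
Lemma eigenvalue_jac_equilibrium C CD D mu :
  0 < B -> 0 <= beta -> 0 <= delta -> 0 < alpha -> 0 <= iota * D -> 0 < mu -> C * D = 0 ->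
  mu ^+ 2 + (iota * (C + CD) + alpha) * mu + eps_const C CD = 0 ->
  eigenvalue (jac F (pt6 C 0 CD 0 0 D)) mu.
Proof.
move=> B_gt0 beta_ge0 delta_ge0 alpha_gt0 iD_ge0 mu_gt0 CD0 root_mu.
have kappa_neq0 := lt0r_neq0 (kappa_gt0 beta_ge0 delta_ge0).
have eta_neq0 := lt0r_neq0 (eta_gt0 B_gt0 beta_ge0).
have den_neq0 : mu + iota * D + alpha != 0 by apply: lt0r_neq0; lra.
pose v1 := alpha * eta * (iota * D + (mu + alpha) * kappa) / (mu + iota * D + alpha).
have Cv1 : C * v1 = C * (alpha * eta * kappa).
  rewrite /v1; apply/eqP; rewrite -subr_eq0; apply/eqP.
  have -> : C * (alpha * eta * (iota * D + (mu + alpha) * kappa) / (mu + iota * D + alpha))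
    - C * (alpha * eta * kappa)
    = C * D * (iota * alpha * eta * (1 - kappa) / (mu + iota * D + alpha)) by field.
  by rewrite CD0 mul0r.
apply: (@eigenvalue_jac_block C CD D mu v1 (alpha * eta) ((mu + alpha) * kappa)).
- by rewrite mulf_neq0 // lt0r_neq0.
- by rewrite /v1; field.
- by field.
- rewrite -mulrA Cv1; apply/eqP; rewrite -subr_eq0 -oppr_eq0 -(mulr0 kappa) -root_mu.
  by apply/eqP; rewrite /eps_const; field.
Qed.

Section Regimes.
Hypotheses (B_gt0 : 0 < B) (beta_ge0 : 0 <= beta) (delta_ge0 : 0 <= delta).
Hypotheses (iota_gt0 : 0 < iota) (alpha_gt0 : 0 < alpha).

Let alpha_iota_gt0 : 0 < alpha * iota. Proof. exact: mulr_gt0. Qed.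

Let beta1_le_beta_delta1 : 1 + beta <= 1 + beta + delta. Proof. by rewrite lerDl. Qed.

Lemma eps_plus_gt0_large_B C CD : 1 + beta + delta < B ->
  0 <= C -> 0 <= CD -> (C, CD) <> (0, 0) -> 0 < eps C CD.
Proof.
move=> large_B C_ge0 CD_ge0 CCD_neq0; apply: eps_plus_gt0 => //.
rewrite /eps_const pmulr_rlt0 // lincomb_lt0 ?one_sub_eta_div_kappa_lt0 //.
by rewrite one_sub_eta_lt0 // (le_lt_trans beta1_le_beta_delta1).
Qed.

Lemma eps_plus_lt0_small_B C CD : B < 1 + beta ->
  0 <= C -> 0 <= CD -> (C, CD) <> (0, 0) -> eps C CD < 0.
Proof.
move=> small_B C_ge0 CD_ge0 CCD_neq0; apply: eps_plus_lt0 => //.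
rewrite /eps_const pmulr_rgt0 // lincomb_gt0 ?one_sub_eta_gt0 //.
by rewrite one_sub_eta_div_kappa_gt0 // (lt_le_trans small_B).
Qed.

Lemma lam_plus_gt0 CD : 1 + beta + delta < B -> 0 < CD -> 0 < lam CD.
Proof.
move=> large_B CD_gt0; rewrite lam_plusE.
by apply: eps_plus_gt0_large_B => //; [exact: ltW | exact: pair0_neq0].
Qed.

Lemma lam_plus_lt0 CD : B < 1 + beta + delta -> 0 < CD -> lam CD < 0.
Proof.
move=> B_lt CD_gt0; rewrite lam_plusE; apply: eps_plus_lt0 => //; first exact: ltW.
by rewrite /eps_const mul0r add0r !mulr_gt0 // one_sub_eta_div_kappa_gt0.
Qed.

Section Intermediate.
Hypotheses (B_gt : 1 + beta < B) (B_lt : B < 1 + beta + delta).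

Let threshold_ratioE : (1 - B / (1 + beta + delta)) / (B / (1 + beta) - 1)
  = (1 - eta / kappa) / - (1 - eta).
Proof. by rewrite eta_div_kappa // opprB. Qed.

Let p_lt0 : 1 - eta < 0. Proof. by rewrite one_sub_eta_lt0. Qed.
Let q_gt0 : 0 < 1 - eta / kappa. Proof. by rewrite one_sub_eta_div_kappa_gt0. Qed.

Lemma eps_plus_lt0_below_threshold C CD : 0 <= C -> 0 < CD ->
  C / CD < (1 - B / (1 + beta + delta)) / (B / (1 + beta) - 1) -> eps C CD < 0.
Proof.
rewrite threshold_ratioE => C_ge0 CD_gt0; rewrite ltr_ratio_lincomb // => lincomb_gt0.
by apply: eps_plus_lt0 => //; [exact: ltW | rewrite pmulr_rgt0].
Qed.

Lemma eps_plus_gt0_above_threshold C CD : 0 <= C -> 0 < CD ->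
  (1 - B / (1 + beta + delta)) / (B / (1 + beta) - 1) < C / CD -> 0 < eps C CD.
Proof.
rewrite threshold_ratioE => C_ge0 CD_gt0; rewrite ltr_lincomb_ratio // => lincomb_lt0.
by apply: eps_plus_gt0 => //; [exact: ltW | rewrite pmulr_rlt0].
Qed.

Lemma eps_plus_gt0_CD0 C : 0 < C -> 0 < eps C 0.
Proof.
move=> C_gt0; apply: eps_plus_gt0 => //; first exact: ltW.
by rewrite /eps_const mul0r addr0 pmulr_rlt0 // pmulr_rlt0.
Qed.

End Intermediate.

Lemma exists_eigenvalue_gt0_large_B C CD D : 1 + beta + delta < B ->
  0 <= C -> 0 <= CD -> 0 <= D -> C * D = 0 -> (C, CD) <> (0, 0) ->
  exists mu, 0 < mu /\ eigenvalue (jac F (pt6 C 0 CD 0 0 D)) mu.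
Proof.
move=> large_B C_ge0 CD_ge0 D_ge0 CD0 CCD_neq0.
have eps_gt0 : 0 < eps C CD by exact: eps_plus_gt0_large_B.
exists (eps C CD); split=> //; apply: eigenvalue_jac_equilibrium => //.
- exact: mulr_ge0 (ltW iota_gt0) D_ge0.
- exact: eps_plus_root.
Qed.

End Regimes.

End Model.

Lemma complex_eigenvalue_jac_cell_free (R : realType) (B beta delta iota alpha V D : R)
    (z : R[i]) :
  0 < iota -> 0 < alpha -> 0 <= V -> 0 <= D ->
  complex_eigenvalue (jac (odeF B beta delta iota alpha) (pt6 0 0 0 0 V D)) z -> z <= 0.
Proof.
move=> iota_gt0 alpha_gt0 V_ge0 D_ge0.
rewrite /complex_eigenvalue jac_odeF char_poly_trig; last first.
  apply/is_trig_mxP => i j lt_ij; rewrite !mxE /odeF_jacobian !coord6_pt6 //.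
  by case: i lt_ij => [[|[|[|[|[|[|?]]]]]] //= _];
     case: j => [[|[|[|[|[|[|?]]]]]] //= _] _; rewrite mulr0.
rewrite !big_ord_recr big_ord0 /= mul1r !rootM !root_XsubC !mxE /odeF_jacobian.
rewrite !coord6_pt6 //=.
by repeat case/orP; move/eqP ->; rewrite lecE /= eqxx /=; nra.
Qed.

Theorem mainTheorem8 (R : realType) (B beta delta iota alpha : R) :
  0 < B -> 0 <= beta -> beta <= 1 -> 1 < delta -> 0 < iota -> 0 < alpha ->
  let F := odeF B beta delta iota alpha in
  let eps := eps_plus B beta delta iota alpha in
  let lam := lam_plus B beta delta iota alpha in
  (* (i) *)
  (1 + beta + delta < B ->
     (forall CD : R, 0 < CD -> 0 < lam CD) /\
     (forall C CD : R, 0 <= C -> 0 <= CD -> (C, CD) <> (0, 0) -> 0 < eps C CD) /\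
     (forall CD D : R, 0 < CD -> 0 <= D ->
        exists mu : R, 0 < mu /\ eigenvalue (jac F (pt6 0 0 CD 0 0 D)) mu) /\
     (forall C CD : R, 0 <= C -> 0 <= CD -> (C, CD) <> (0, 0) ->
        exists mu : R, 0 < mu /\ eigenvalue (jac F (pt6 C 0 CD 0 0 0)) mu)) /\
  (* (ii) *)
  (1 + beta < B -> B < 1 + beta + delta ->
     (forall CD : R, 0 < CD -> lam CD < 0) /\
     (forall C CD : R, 0 <= C -> 0 < CD ->
        C / CD < (1 - B / (1 + beta + delta)) / (B / (1 + beta) - 1) -> eps C CD < 0) /\
     (forall C CD : R, 0 <= C -> 0 < CD ->
        (1 - B / (1 + beta + delta)) / (B / (1 + beta) - 1) < C / CD -> 0 < eps C CD) /\
     (forall C : R, 0 < C -> 0 < eps C 0)) /\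
  (* (iii) *)
  (B < 1 + beta ->
     (forall CD : R, 0 < CD -> lam CD < 0) /\
     (forall C CD : R, 0 <= C -> 0 <= CD -> (C, CD) <> (0, 0) -> eps C CD < 0)) /\
  (* all cases: at (0,0,0,0,V,D) all (complex) Jacobian eigenvalues are real and <= 0 *)
  (forall V D : R, 0 <= V -> 0 <= D -> (V, D) <> (0, 0) ->
     forall z : R[i], complex_eigenvalue (jac F (pt6 0 0 0 0 V D)) z -> z <= 0).
Proof.
move=> B_gt0 beta_ge0 _ delta_gt1 iota_gt0 alpha_gt0 F eps lam.
have delta_ge0 : 0 <= delta by lra.
split; [move=> large_B | split; [move=> B_gt B_lt | split; [move=> small_B |]]].
- split; first by move=> CD; apply: lam_plus_gt0.
  split; first by move=> C CD; apply: eps_plus_gt0_large_B.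
  split=> [CD D CD_gt0 D_ge0 | C CD C_ge0 CD_ge0 CCD_neq0].
  + apply: exists_eigenvalue_gt0_large_B; rewrite ?mul0r //; first exact: ltW.
    exact: pair0_neq0.
  + by apply: exists_eigenvalue_gt0_large_B; rewrite ?mulr0.
- split; first by move=> CD; apply: lam_plus_lt0.
  split; first by move=> C CD; apply: eps_plus_lt0_below_threshold.
  split; first by move=> C CD; apply: eps_plus_gt0_above_threshold.
  by move=> C; apply: eps_plus_gt0_CD0.
- split; first by move=> CD; apply: lam_plus_lt0 => //; lra.
  by move=> C CD; apply: eps_plus_lt0_small_B.
- by move=> V D V_ge0 D_ge0 _ z; apply: complex_eigenvalue_jac_cell_free.
Qed.
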